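(* The family $\mathcal A$ of achievement sets contained in $[0,1]$ is closed in $K_0([0,1])$ and in $K([0,1])$, with respect to the Pompeiu–Hausdorff metric.
   Context: For an absolutely convergent real series $\sum_n a_n$, its achievement set is $E(a_n):=\{\sum_{n\in A}a_n:\ A\subset\mathbb N\}$ (a compact set containing $0$). $\mathcal A$ denotes the family of all sets $E(a_n)$, for absolutely convergent real series $\sum a_n$, that are contained in $[0,1]$. $K([0,1])$ is the family of non-empty compact subsets of $[0,1]$ and $K_0([0,1])$ the family of compact subsets of $[0,1]$ containing $0$, both with the Pompeiu–Hausdorff metric $d_H(A,B)=\max\{\sup_{a\in A}\operatorname{dist}(a,B),\sup_{b\in B}\operatorname{dist}(b,A)\}$. *)

From Stdlib Require Import Reals.
From Coquelicot Require Import Coquelicot.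
Open Scope R_scope.

Definition abs_convergent (a : nat -> R) : Prop := ex_series (fun n => Rabs (a n)).

(* Achievement set E(a_n) = { sum_{n in A} a_n : A subset N };
   a subset A of N is represented by its indicator A : nat -> bool. *)
Definition achievement_set (a : nat -> R) (x : R) : Prop :=
  exists A : nat -> bool, is_series (fun n => if A n then a n else 0) x.

Definition in_unit_interval (S : R -> Prop) : Prop :=
  forall x, S x -> 0 <= x <= 1.

Definition in_K01 (S : R -> Prop) : Prop :=
  (exists x, S x) /\ compact S /\ in_unit_interval S.

Definition in_K0_01 (S : R -> Prop) : Prop :=
  S 0 /\ compact S /\ in_unit_interval S.

Definition in_calA (S : R -> Prop) : Prop :=
  exists a : nat -> R, abs_convergent a /\
    (forall x, S x <-> achievement_set a x) /\ in_unit_interval S.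

Definition dist_set (x : R) (B : R -> Prop) : R :=
  real (Glb_Rbar (fun r => exists b, B b /\ r = Rabs (x - b))).

(* Pompeiu–Hausdorff distance (finite for non-empty bounded sets). *)
Definition hausdorff_dist (A B : R -> Prop) : R :=
  Rmax (real (Lub_Rbar (fun r => exists a, A a /\ r = dist_set a B)))
       (real (Lub_Rbar (fun r => exists b, B b /\ r = dist_set b A))).

Definition closed_in_hausdorff (inX F : (R -> Prop) -> Prop) : Prop :=
  forall K, inX K -> ~ F K ->
    exists eps, 0 < eps /\
      forall K', inX K' -> hausdorff_dist K' K < eps -> ~ F K'.

(* Let K be the Hausdorff limit of achievement sets E(a^k) in [0,1].  All terms
   are nonnegative (a_n lies in E(a)), so each a^k may be rearranged into a
   nonincreasing c^k without changing E(a^k).  A diagonal argument gives a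
   subsequence along which the sums s_k tend to some s and every term c^k_m tends
   to b_m; then sum b = B <= s, and the mass t = s - B escapes to infinity.
   Because the tails of c^k have small terms, their partial sums fill [0, t] with
   small gaps, so K consists exactly of the limits of (partial subsum of b) + y
   with y in [0, t].  Interleaving b with t/2, t/4, ... (whose subsums fill [0, t])
   yields a series d with E(d) = K. *)

From Stdlib Require Import Reals Lra Lia List ClassicalEpsilon FunctionalExtensionality.
From Coquelicot Require Import Coquelicot.
Open Scope R_scope.

Fixpoint psum (f : nat -> R) (n : nat) : R :=
  match n with O => 0 | S m => psum f m + f m end.

Definition sums (f : nat -> R) (l : R) : Prop := Un_cv (psum f) l.

Definition mask (A : nat -> bool) (f : nat -> R) (n : nat) : R := if A n then f n else 0.

Definition subsum (a : nat -> R) (x : R) : Prop := exists A, sums (mask A a) x.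

Lemma psum_succ_sum_n f n : psum f (S n) = sum_n f n.
Proof.
  induction n as [|n IH]; simpl.
  - rewrite sum_O. ring.
  - rewrite sum_Sn, <- IH. simpl. unfold plus; simpl. ring.
Qed.

Lemma Un_cv_shift u l : Un_cv u l <-> Un_cv (fun n => u (S n)) l.
Proof.
  split; intros H e He; destruct (H e He) as [N HN].
  - exists N. intros n Hn. apply HN. lia.
  - exists (S N). intros [|n] Hn; [lia|]. apply HN. lia.
Qed.

Lemma is_series_sums f l : is_series f l <-> sums f l.
Proof.
  unfold sums. rewrite Un_cv_shift.
  replace (fun n => psum f (S n)) with (sum_n f)
    by (apply functional_extensionality; intro; symmetry; apply psum_succ_sum_n).
  rewrite <- is_lim_seq_Reals. reflexivity.
Qed.

Lemma achievement_set_subsum a x : achievement_set a x <-> subsum a x.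
Proof.
  split; intros [A H]; exists A; apply is_series_sums; exact H.
Qed.

Lemma psum_ext f g n : (forall i, (i < n)%nat -> f i = g i) -> psum f n = psum g n.
Proof.
  induction n as [|n IH]; intros H; simpl; [reflexivity|].
  rewrite IH by (intros; apply H; lia). rewrite H by lia. reflexivity.
Qed.

Lemma psum_le_compat f g n : (forall i, (i < n)%nat -> f i <= g i) -> psum f n <= psum g n.
Proof.
  induction n as [|n IH]; intros H; simpl; [lra|].
  assert (psum f n <= psum g n) by (apply IH; intros; apply H; lia).
  assert (f n <= g n) by (apply H; lia). lra.
Qed.

Lemma psum_dist_le f g n eta : (forall i, (i < n)%nat -> Rabs (f i - g i) <= eta) ->
  Rabs (psum f n - psum g n) <= INR n * eta.
Proof.
  induction n as [|n IH]; intros H; cbn [psum].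
  - rewrite Rminus_0_r, Rabs_R0. simpl. lra.
  - assert (Rabs (psum f n - psum g n) <= INR n * eta) by (apply IH; intros; apply H; lia).
    assert (Rabs (f n - g n) <= eta) by (apply H; lia).
    rewrite S_INR.
    replace (psum f n + f n - (psum g n + g n)) with ((psum f n - psum g n) + (f n - g n)) by ring.
    eapply Rle_trans; [apply Rabs_triang|lra].
Qed.

Lemma psum_add f N m : psum f (N + m) = psum f N + psum (fun i => f (N + i)%nat) m.
Proof.
  induction m as [|m IH]; simpl; [rewrite Nat.add_0_r; ring|].
  rewrite Nat.add_succ_r. simpl. rewrite IH. ring.
Qed.

Lemma psum_eventually_const f N n : (forall i, (N <= i)%nat -> f i = 0) ->
  (N <= n)%nat -> psum f n = psum f N.
Proof.
  intros H Hn. induction Hn as [|n Hn IH]; simpl; [reflexivity|]. rewrite IH, H by lia. ring.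
Qed.

Section PartialSums.

Variable f : nat -> R.
Hypothesis f_nonneg : forall i, 0 <= f i.

Lemma psum_growing : Un_growing (psum f).
Proof. intros n. simpl. specialize (f_nonneg n). lra. Qed.

Lemma psum_nonneg n : 0 <= psum f n.
Proof. induction n as [|n IH]; simpl; [lra|]. specialize (f_nonneg n). lra. Qed.

Lemma psum_le_sums l n : sums f l -> psum f n <= l.
Proof. intros H. exact (growing_ineq (psum f) l psum_growing H n). Qed.

Lemma sums_of_bounded M : (forall n, psum f n <= M) -> exists l, sums f l /\ l <= M.
Proof.
  intros HM. destruct (growing_cv (psum f) psum_growing) as [l Hl].
  { exists M. intros x [i ->]. apply HM. }
  exists l. split; [exact Hl|].
  apply (Rle_cv_lim (Un := psum f) (Vn := fun _ => M)); auto.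
  intros e He. exists O. intros. unfold R_dist. rewrite Rminus_eq_0, Rabs_R0. lra.
Qed.

End PartialSums.

Lemma sums_ext f g l : (forall n, f n = g n) -> sums f l -> sums g l.
Proof. intros H. replace g with f; [auto|]. apply functional_extensionality. auto. Qed.

Lemma sums_unique f l1 l2 : sums f l1 -> sums f l2 -> l1 = l2.
Proof. apply UL_sequence. Qed.

Lemma sums_finite_support f N : (forall i, (N <= i)%nat -> f i = 0) -> sums f (psum f N).
Proof.
  intros H e He. exists N. intros n Hn. unfold R_dist.
  rewrite (psum_eventually_const f N n H Hn), Rminus_eq_0, Rabs_R0. lra.
Qed.

Lemma sums_tail f l N : sums f l -> sums (fun i => f (N + i)%nat) (l - psum f N).
Proof.
  intros H e He. destruct (H e He) as [M HM]. exists M. intros n Hn.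
  specialize (HM (N + n)%nat ltac:(lia)). unfold R_dist in *.
  rewrite psum_add in HM.
  replace (psum (fun i => f (N + i)%nat) n - (l - psum f N))
    with (psum f N + psum (fun i => f (N + i)%nat) n - l) by ring. exact HM.
Qed.

Lemma sums_terms_small f l e : sums f l -> 0 < e ->
  exists N, forall n, (N <= n)%nat -> Rabs (f n) < e.
Proof.
  intros H He. destruct (H (e/2) ltac:(lra)) as [N HN]. exists N. intros n Hn.
  pose proof (HN n Hn). pose proof (HN (S n) ltac:(lia)). unfold R_dist in *. simpl in *.
  replace (f n) with ((psum f n + f n - l) - (psum f n - l)) by ring.
  eapply Rle_lt_trans; [apply Rabs_triang|]. rewrite Rabs_Ropp. lra.
Qed.

Definition trunc (A : nat -> bool) (N : nat) (i : nat) : bool := andb (Nat.ltb i N) (A i).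

Lemma psum_mask_trunc f A N M : (N <= M)%nat -> psum (mask (trunc A N) f) M = psum (mask A f) N.
Proof.
  intros H. rewrite (psum_eventually_const _ N M); auto.
  - apply psum_ext. intros i Hi. unfold mask, trunc.
    replace (Nat.ltb i N) with true by (symmetry; apply Nat.ltb_lt; lia). reflexivity.
  - intros i Hi. unfold mask, trunc.
    replace (Nat.ltb i N) with false by (symmetry; apply Nat.ltb_ge; lia). reflexivity.
Qed.

Lemma psum_mask_dist_le f g A N eta : (forall i, (i < N)%nat -> Rabs (f i - g i) <= eta) ->
  Rabs (psum (mask A f) N - psum (mask A g) N) <= INR N * eta.
Proof.
  intros H. apply psum_dist_le. intros i Hi. unfold mask. destruct (A i); auto.
  rewrite Rminus_0_r, Rabs_R0. specialize (H i Hi). pose proof (Rabs_pos (f i - g i)). lra.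
Qed.

Lemma subsum_split f A N m : subsum f (psum (mask A f) N + psum (fun i => f (N + i)%nat) m).
Proof.
  set (C := fun i => orb (trunc A N i) (andb (Nat.leb N i) (Nat.ltb i (N + m)))).
  exists C.
  assert (E : psum (mask C f) (N + m) = psum (mask A f) N + psum (fun i => f (N + i)%nat) m).
  { rewrite psum_add. f_equal.
    - apply psum_ext. intros i Hi. unfold mask, C, trunc.
      replace (Nat.ltb i N) with true by (symmetry; apply Nat.ltb_lt; lia).
      replace (Nat.leb N i) with false by (symmetry; apply Nat.leb_gt; lia).
      destruct (A i); reflexivity.
    - apply psum_ext. intros i Hi. unfold mask, C, trunc.
      replace (Nat.ltb (N + i) N) with false by (symmetry; apply Nat.ltb_ge; lia).
      replace (Nat.leb N (N + i)) with true by (symmetry; apply Nat.leb_le; lia).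
      replace (Nat.ltb (N + i) (N + m)) with true by (symmetry; apply Nat.ltb_lt; lia).
      reflexivity. }
  rewrite <- E. apply sums_finite_support. intros i Hi. unfold mask, C, trunc.
  replace (Nat.ltb i N) with false by (symmetry; apply Nat.ltb_ge; lia).
  replace (Nat.ltb i (N + m)) with false by (symmetry; apply Nat.ltb_ge; lia).
  destruct (Nat.leb N i); reflexivity.
Qed.

Lemma psum_mask_none f n : psum (mask (fun _ => false) f) n = 0.
Proof. induction n as [|n IH]; simpl; [reflexivity|]. rewrite IH. unfold mask. ring. Qed.

Lemma subsum_psum f n : subsum f (psum f n).
Proof.
  pose proof (subsum_split f (fun _ => false) 0 n) as H.
  simpl in H. rewrite Rplus_0_l in H. exact H.
Qed.

Lemma subsum_term f n : subsum f (f n).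
Proof.
  pose proof (subsum_split f (fun _ => false) n 1) as H.
  rewrite psum_mask_none in H. simpl in H. rewrite Nat.add_0_r in H.
  replace (0 + (0 + f n)) with (f n) in H by ring. exact H.
Qed.

Section Masks.

Variable f : nat -> R.
Hypothesis f_nonneg : forall i, 0 <= f i.

Lemma mask_nonneg A i : 0 <= mask A f i.
Proof. unfold mask. destruct (A i); [apply f_nonneg|lra]. Qed.

Lemma mask_le A i : mask A f i <= f i.
Proof. unfold mask. destruct (A i); [lra|apply f_nonneg]. Qed.

Lemma subsum_tail_bounds D A x N : sums f D -> sums (mask A f) x ->
  0 <= x - psum (mask A f) N <= D - psum f N.
Proof.
  intros HD Hx.
  pose proof (sums_tail _ _ N HD) as T1. pose proof (sums_tail _ _ N Hx) as T2.
  split.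
  - pose proof (psum_le_sums _ (fun i => mask_nonneg A (N + i)) _ 0 T2). simpl in H. lra.
  - apply (Rle_cv_lim (Un := psum (fun i => mask A f (N + i)%nat))
                      (Vn := psum (fun i => f (N + i)%nat))); auto.
    intro n. apply psum_le_compat. intros. apply mask_le.
Qed.

End Masks.

Definition lsum (f : nat -> R) (l : list nat) : R := fold_right (fun x acc => f x + acc) 0 l.

Lemma lsum_app f l1 l2 : lsum f (l1 ++ l2) = lsum f l1 + lsum f l2.
Proof. induction l1 as [|x l1 IH]; simpl; [ring|]. rewrite IH. ring. Qed.

Lemma lsum_map f g l : lsum f (map g l) = lsum (fun x => f (g x)) l.
Proof. induction l as [|x l IH]; simpl; [reflexivity|]. rewrite IH. reflexivity. Qed.

Lemma psum_lsum f n : psum f n = lsum f (seq 0 n).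
Proof. induction n as [|n IH]; [reflexivity|]. rewrite seq_S, lsum_app. simpl. rewrite IH. ring. Qed.

Definition lmax (l : list nat) : nat := fold_right Nat.max 0%nat l.

Lemma lmax_ge l x : In x l -> (x <= lmax l)%nat.
Proof. induction l as [|y l IH]; simpl; [tauto|]. intros [->|H]; [lia|]. specialize (IH H). lia. Qed.

Lemma NoDup_map_injective (s : nat -> nat) l : (forall i j, s i = s j -> i = j) ->
  NoDup l -> NoDup (map s l).
Proof.
  intros Hs Hl. induction Hl as [|x l Hx Hl IH]; simpl; constructor; auto.
  intro H. apply in_map_iff in H as [y [E Hy]]. apply Hs in E. subst. contradiction.
Qed.

Section Rearrangement.

Variable f : nat -> R.
Hypothesis f_nonneg : forall i, 0 <= f i.

Lemma lsum_nonneg l : 0 <= lsum f l.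
Proof. induction l as [|y l IH]; simpl; [lra|]. specialize (f_nonneg y). lra. Qed.

Lemma lsum_remove_le x l : lsum f (remove Nat.eq_dec x l) <= lsum f l.
Proof.
  induction l as [|y l IH]; simpl; [lra|].
  destruct (Nat.eq_dec x y); simpl; specialize (f_nonneg y); lra.
Qed.

Lemma lsum_remove x l : In x l -> f x + lsum f (remove Nat.eq_dec x l) <= lsum f l.
Proof.
  induction l as [|y l IH]; simpl; [tauto|].
  intros Hin. destruct (Nat.eq_dec x y) as [<-|Hxy].
  - pose proof (lsum_remove_le x l). lra.
  - destruct Hin as [->|Hin]; [congruence|]. simpl. specialize (IH Hin). lra.
Qed.

Lemma lsum_le_cover l : NoDup l -> forall l',
  (forall x, In x l -> f x <> 0 -> In x l') -> lsum f l <= lsum f l'.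
Proof.
  induction l as [|x l IH]; intros Hnd l' H; simpl.
  - apply lsum_nonneg.
  - apply NoDup_cons_iff in Hnd as [Hx Hnd].
    destruct (Req_dec (f x) 0) as [E|E].
    + rewrite E, Rplus_0_l. apply IH; auto. intros y Hy. apply H. now right.
    + assert (Hxl : In x l') by (apply H; auto; now left).
      assert (lsum f l <= lsum f (remove Nat.eq_dec x l')).
      { apply IH; auto. intros y Hy Hfy. apply in_in_remove.
        - intros ->. contradiction.
        - apply H; auto. now right. }
      pose proof (lsum_remove x l' Hxl). lra.
Qed.

Variable s : nat -> nat.
Hypothesis s_inj : forall i j, s i = s j -> i = j.

Lemma psum_reindex_le l m : sums f l -> psum (fun n => f (s n)) m <= l.
Proof.
  intros Hl. rewrite psum_lsum, <- lsum_map.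
  eapply Rle_trans; [|apply (psum_le_sums f f_nonneg l (S (lmax (map s (seq 0 m)))) Hl)].
  rewrite psum_lsum. apply lsum_le_cover.
  - apply NoDup_map_injective; auto. apply seq_NoDup.
  - intros x Hx _. apply in_seq. apply lmax_ge in Hx. lia.
Qed.

Hypothesis s_covers : forall m, f m <> 0 -> exists n, s n = m.

Lemma reindex_covers_prefix M :
  exists m, forall i, (i < M)%nat -> f i <> 0 -> exists j, (j < m)%nat /\ s j = i.
Proof.
  induction M as [|M [m Hm]]; [exists O; intros; lia|].
  destruct (Req_dec (f M) 0) as [E|E].
  - exists m. intros i Hi Hfi. destruct (Nat.eq_dec i M) as [->|]; [contradiction|].
    apply Hm; auto; lia.
  - destruct (s_covers M E) as [j Hj]. exists (Nat.max m (S j)). intros i Hi Hfi.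
    destruct (Nat.eq_dec i M) as [->|].
    + exists j. split; auto. lia.
    + destruct (Hm i ltac:(lia) Hfi) as [j' [Hj' E']]. exists j'. split; auto. lia.
Qed.

Lemma sums_reindex l : sums f l -> sums (fun n => f (s n)) l.
Proof.
  intros Hl e He. destruct (Hl e He) as [M HM].
  specialize (HM M (le_n M)). unfold R_dist in HM.
  destruct (reindex_covers_prefix M) as [m Hm].
  exists m. intros n Hn. unfold R_dist.
  assert (psum f M <= psum (fun n => f (s n)) m).
  { rewrite (psum_lsum f M), (psum_lsum (fun n => f (s n)) m), <- (lsum_map f s).
    apply lsum_le_cover; [apply seq_NoDup|].
    intros x Hx Hfx. apply in_seq in Hx. destruct (Hm x ltac:(lia) Hfx) as [j [Hj E]].
    subst. apply in_map. apply in_seq. lia. }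
  assert (psum (fun n => f (s n)) m <= psum (fun n => f (s n)) n)
    by (apply Rge_le, growing_prop; [apply psum_growing; intro; apply f_nonneg|lia]).
  pose proof (psum_reindex_le l n Hl).
  pose proof (psum_le_sums f f_nonneg l M Hl).
  rewrite Rabs_left1 by lra. rewrite Rabs_left1 in HM by lra. lra.
Qed.

End Rearrangement.

Lemma subsum_reindex f s l x : (forall i, 0 <= f i) -> (forall i j, s i = s j -> i = j) ->
  (forall m, f m <> 0 -> exists n, s n = m) -> sums f l -> subsum f x <-> subsum (fun n => f (s n)) x.
Proof.
  intros f_nonneg s_inj s_covers Hl.
  assert (Hcov : forall A m, mask A f m <> 0 -> exists n, s n = m).
  { intros A m Hm. apply s_covers. unfold mask in Hm. destruct (A m); [exact Hm|lra]. }
  split.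
  - intros [A HA]. exists (fun n => A (s n)).
    apply (sums_reindex (mask A f) (mask_nonneg f f_nonneg A) s s_inj (Hcov A)) in HA; exact HA.
  - intros [B HB].
    set (A := fun m => if excluded_middle_informative (exists n, s n = m /\ B n = true)
                       then true else false).
    destruct (sums_of_bounded (mask A f) (mask_nonneg f f_nonneg A) l) as [y [Hy _]].
    { intro n. eapply Rle_trans; [apply psum_le_compat; intros; apply mask_le, f_nonneg|].
      apply psum_le_sums; auto. }
    exists A. replace x with y; [exact Hy|].
    apply (sums_unique (mask B (fun n => f (s n)))); auto.
    apply sums_ext with (f := fun n => mask A f (s n)).
    + intro n. unfold mask, A. destruct (excluded_middle_informative _) as [[n' [E Hb]]|Hn].
      * apply s_inj in E. subst. rewrite Hb. reflexivity.
      * destruct (B n) eqn:Eb; auto. exfalso. apply Hn. eauto.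
    + exact (sums_reindex (mask A f) (mask_nonneg f f_nonneg A) s s_inj (Hcov A) y Hy).
Qed.



Lemma finite_argmax (f : nat -> R) (Q : nat -> Prop) N : (exists j, (j < N)%nat /\ Q j) ->
  exists m, (m < N)%nat /\ Q m /\ forall j, (j < N)%nat -> Q j -> f j <= f m.
Proof.
  induction N as [|N IH]; intros [j0 [Hj0 Q0]]; [lia|].
  destruct (Classical_Prop.classic (exists j, (j < N)%nat /\ Q j)) as [Hex|Hno].
  - destruct (IH Hex) as [m [Hm [Qm Hmax]]].
    destruct (Classical_Prop.classic (Q N)) as [QN|QN];
      [destruct (Rle_lt_dec (f N) (f m))|].
    + exists m. repeat split; auto. intros j Hj Qj.
      destruct (Nat.eq_dec j N) as [->|]; auto. apply Hmax; auto; lia.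
    + exists N. repeat split; auto. intros j Hj Qj.
      destruct (Nat.eq_dec j N) as [->|]; [lra|]. specialize (Hmax j ltac:(lia) Qj). lra.
    + exists m. repeat split; auto. intros j Hj Qj.
      destruct (Nat.eq_dec j N) as [->|]; [contradiction|]. apply Hmax; auto; lia.
  - assert (j0 = N).
    { destruct (Nat.eq_dec j0 N); auto. exfalso. apply Hno. exists j0. split; auto; lia. }
    subst. exists N. repeat split; auto. intros j Hj Qj.
    destruct (Nat.eq_dec j N) as [->|]; [lra|].
    exfalso. apply Hno. exists j. split; auto; lia.
Qed.

Definition is_max_outside (a : nat -> R) (L : list nat) (m : nat) : Prop :=
  ~ In m L /\ forall j, ~ In j L -> a j <= a m.

Definition max_outside (a : nat -> R) (L : list nat) : nat :=
  epsilon (inhabits 0%nat) (is_max_outside a L).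

Fixpoint first_maxima (a : nat -> R) (n : nat) : list nat :=
  match n with
  | O => nil
  | S m => first_maxima a m ++ max_outside a (first_maxima a m) :: nil
  end.

Definition sort_index (a : nat -> R) (n : nat) : nat := max_outside a (first_maxima a n).

Lemma In_first_maxima a n x : In x (first_maxima a n) <-> exists j, (j < n)%nat /\ sort_index a j = x.
Proof.
  induction n as [|n IH]; simpl.
  - split; [tauto|]. intros [j [Hj _]]. lia.
  - rewrite in_app_iff, IH. simpl. split.
    + intros [[j [Hj E]]|[E|[]]]; [exists j|exists n]; split; auto.
    + intros [j [Hj E]]. destruct (Nat.eq_dec j n) as [->|]; [right; now left|].
      left. exists j. split; auto. lia.
Qed.

Section DecreasingRearrangement.

Variables (a : nat -> R) (sa : R).
Hypothesis a_nonneg : forall i, 0 <= a i.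
Hypothesis a_sums : sums a sa.

(* Since [a n -> 0], a positive term outside [L] bounds all but finitely many terms. *)
Lemma max_outside_exists L : exists m, is_max_outside a L m.
Proof.
  destruct (Classical_Prop.classic (exists j, ~ In j L /\ 0 < a j)) as [[j0 [Hj0 Pj0]]|Hno].
  - destruct (sums_terms_small a sa (a j0) a_sums Pj0) as [N HN].
    destruct (finite_argmax a (fun j => ~ In j L) (Nat.max N (S j0))) as [m [Hm [Qm Hmax]]].
    { exists j0. split; auto. lia. }
    exists m. split; auto. intros j Hj.
    destruct (Nat.lt_ge_cases j (Nat.max N (S j0))); [apply Hmax; auto|].
    specialize (HN j ltac:(lia)). rewrite Rabs_right in HN by (apply Rle_ge, a_nonneg).
    specialize (Hmax j0 ltac:(lia) Hj0). lra.
  - exists (S (lmax L)). split.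
    + intro H. apply lmax_ge in H. lia.
    + intros j Hj. destruct (Rle_lt_dec (a j) 0); [pose proof (a_nonneg (S (lmax L))); lra|].
      exfalso. apply Hno. eauto.
Qed.

Lemma sort_index_spec n : is_max_outside a (first_maxima a n) (sort_index a n).
Proof. unfold sort_index, max_outside. apply epsilon_spec, max_outside_exists. Qed.

Lemma sort_index_inj i j : sort_index a i = sort_index a j -> i = j.
Proof.
  assert (Hlt : forall i j, (i < j)%nat -> sort_index a i <> sort_index a j).
  { intros i' j' Hij E. apply (proj1 (sort_index_spec j')).
    apply In_first_maxima. eauto. }
  intros E. destruct (Nat.lt_trichotomy i j) as [h|[h|h]]; auto.
  - exfalso; eapply Hlt; eauto.
  - exfalso; eapply Hlt; eauto.
Qed.

Lemma sort_index_decreasing : Un_decreasing (fun n => a (sort_index a n)).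
Proof.
  intro n. apply (proj2 (sort_index_spec n)). intro Hin.
  apply (proj1 (sort_index_spec (S n))). simpl. apply in_or_app. now left.
Qed.

(* A positive term that is never picked would be dominated by all infinitely many
   picked terms, whose sum is at most [sa]. *)
Lemma sort_index_covers m : a m <> 0 -> exists n, sort_index a n = m.
Proof.
  intros Hm. apply Classical_Prop.NNPP. intro Hno.
  assert (Hge : forall n, a m <= a (sort_index a n)).
  { intro n. apply (proj2 (sort_index_spec n)). intro Hin. apply In_first_maxima in Hin.
    destruct Hin as [j [_ E]]. apply Hno. eauto. }
  assert (Hpos : 0 < a m) by (pose proof (a_nonneg m); lra).
  destruct (INR_archimed (a m) sa Hpos) as [n Hn].
  assert (INR n * a m <= psum (fun k => a (sort_index a k)) n).
  { clear Hn. induction n as [|n IH]; cbn [psum]; [simpl; lra|]. rewrite S_INR. specialize (Hge n). lra. }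
  pose proof (psum_reindex_le a a_nonneg (sort_index a) sort_index_inj sa n a_sums). lra.
Qed.

Lemma decreasing_rearrangement :
  exists c, (forall i, 0 <= c i) /\ Un_decreasing c /\ sums c sa /\
    (forall x, subsum a x <-> subsum c x).
Proof.
  exists (fun n => a (sort_index a n)). split; [|split; [|split]].
  - intro; apply a_nonneg.
  - exact sort_index_decreasing.
  - exact (sums_reindex a a_nonneg _ sort_index_inj sort_index_covers sa a_sums).
  - intro x. exact (subsum_reindex a _ sa x a_nonneg sort_index_inj sort_index_covers a_sums).
Qed.

End DecreasingRearrangement.

Lemma inv_succ_pos j : 0 < / INR (S j).
Proof. apply Rinv_0_lt_compat, lt_0_INR; lia. Qed.

Lemma inv_succ_lt e : 0 < e -> exists J, forall j, (J <= j)%nat -> / INR (S j) < e.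
Proof.
  intros He. destruct (INR_archimed e 1 He) as [n Hn]. exists n. intros j Hj.
  assert (INR n <= INR (S j)) by (apply le_INR; lia).
  assert (0 < INR (S j)) by (apply lt_0_INR; lia).
  apply (Rmult_lt_reg_l (INR (S j))); auto. rewrite Rinv_r by lra. nra.
Qed.

Lemma unit_interval_cluster (v : nat -> R) : (forall j, 0 <= v j <= 1) ->
  exists l, forall e, 0 < e -> forall J, exists j, (J <= j)%nat /\ Rabs (v j - l) < e.
Proof.
  intros H. destruct (Bolzano_Weierstrass v (fun c => 0 <= c <= 1) (compact_P3 0 1) H) as [l Hl].
  exists l. intros e He J.
  destruct (Hl (disc l (mkposreal e He)) J) as [p [Hp Hv]].
  - exists (mkposreal e He). intros y Hy; exact Hy.
  - exists p. split; auto.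
Qed.

Definition cluster_on (u : nat -> nat -> R) (n : nat) (f : nat -> R) : Prop :=
  forall e, 0 < e -> forall k0, exists k, (k0 <= k)%nat /\
    forall i, (i < n)%nat -> Rabs (u k i - f i) < e.

Definition set_at (f : nat -> R) (n : nat) (y : R) (i : nat) : R :=
  if Nat.eq_dec i n then y else f i.

Section Diagonal.

Variable u : nat -> nat -> R.
Hypothesis u_unit : forall k i, 0 <= u k i <= 1.

Lemma cluster_on_extend n f : cluster_on u n f -> exists y, cluster_on u (S n) (set_at f n y).
Proof.
  intros G.
  assert (H : forall j, exists k, (j <= k)%nat /\
                forall i, (i < n)%nat -> Rabs (u k i - f i) < / INR (S j))
    by (intro j; apply G, inv_succ_pos).
  apply choice in H as [kk Hkk].
  destruct (unit_interval_cluster (fun j => u (kk j) n)) as [y Hy]; [intro; apply u_unit|].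
  exists y. intros e He k0. destruct (inv_succ_lt e He) as [J HJ].
  destruct (Hy e He (Nat.max J k0)) as [j [Hj Hv]].
  destruct (Hkk j) as [Hk1 Hk2].
  exists (kk j). split; [lia|]. intros i Hi. unfold set_at. destruct (Nat.eq_dec i n) as [->|].
  - exact Hv.
  - eapply Rlt_trans; [apply Hk2; lia|]. apply HJ. lia.
Qed.

Fixpoint diagonal_prefix (n : nat) : nat -> R :=
  match n with
  | O => fun _ => 0
  | S m => set_at (diagonal_prefix m) m
             (epsilon (inhabits 0) (fun y => cluster_on u (S m) (set_at (diagonal_prefix m) m y)))
  end.

Lemma diagonal_cluster : exists f, forall n, cluster_on u n f.
Proof.
  assert (G : forall n, cluster_on u n (diagonal_prefix n)).
  { induction n as [|n IH].
    - intros e He k0. exists k0. split; [lia|]. intros; lia.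
    - simpl. apply epsilon_spec, cluster_on_extend, IH. }
  assert (Stable : forall i m, (i < m)%nat -> diagonal_prefix m i = diagonal_prefix (S i) i).
  { intros i m Him. induction Him as [|m Him IH]; [reflexivity|].
    simpl. unfold set_at at 1. destruct (Nat.eq_dec i m); [lia|exact IH]. }
  exists (fun i => diagonal_prefix (S i) i). intros n e He k0.
  destruct (G n e He k0) as [k [Hk Hi]]. exists k. split; auto.
  intros i Hin. rewrite <- (Stable i n Hin). auto.
Qed.

End Diagonal.

(* Compactness of the Cantor space {0,1}^N: a limit of subsums is a subsum, by
   extracting a coordinatewise cluster point of the index sets. *)
Lemma subsum_closed d D x : (forall i, 0 <= d i) -> sums d D ->
  (forall del, 0 < del -> exists y, subsum d y /\ Rabs (y - x) < del) -> subsum d x.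
Proof.
  intros Hd HD Hx.
  assert (H : forall k, exists p : (nat -> bool) * R,
                sums (mask (fst p) d) (snd p) /\ Rabs (snd p - x) < / INR (S k)).
  { intro k. destruct (Hx _ (inv_succ_pos k)) as [y [[A HA] Hy]]. exists (A, y). auto. }
  apply choice in H as [p Hp].
  set (u := fun k n => if fst (p k) n then 1 else 0).
  destruct (diagonal_cluster u) as [f Hf].
  { intros k i. unfold u. destruct (fst (p k) i); lra. }
  exists (fun n => if Rlt_dec (1/2) (f n) then true else false). intros e He.
  destruct (HD (e/4) ltac:(lra)) as [N0 HN0].
  destruct (inv_succ_lt (e/4) ltac:(lra)) as [J HJ].
  exists N0. intros N HN. unfold R_dist.
  destruct (Hf N (1/2) ltac:(lra) J) as [k [Hk Hclose]].
  erewrite psum_ext with (g := mask (fst (p k)) d).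
  2:{ intros i Hi. specialize (Hclose i Hi). unfold mask, u in *.
      destruct (fst (p k) i), (Rlt_dec (1/2) (f i)); auto; exfalso;
        apply Rabs_def2 in Hclose; lra. }
  destruct (Hp k) as [Hs Hy].
  pose proof (subsum_tail_bounds d Hd D (fst (p k)) (snd (p k)) N HD Hs).
  specialize (HN0 N HN). unfold R_dist in HN0.
  pose proof (psum_le_sums d Hd D N HD).
  rewrite Rabs_left1 in HN0 by lra.
  specialize (HJ k Hk).
  apply Rabs_def2 in Hy. apply Rabs_def1; lra.
Qed.

Lemma psum_dense g Rt del y : 0 < del -> (forall i, 0 <= g i <= del) -> sums g Rt ->
  0 <= y <= Rt -> exists m, Rabs (psum g m - y) <= del.
Proof.
  intros Hdel Hg HR Hy.
  destruct (Rle_lt_dec y del).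
  { exists O. simpl. rewrite Rabs_left1 by lra. lra. }
  assert (Climb : forall m, psum g m <= y - del \/ exists m', Rabs (psum g m' - y) <= del).
  { induction m as [|m [IH|IH]]; [left; simpl; lra| |right; exact IH].
    destruct (Rle_lt_dec (psum g (S m)) (y - del)); [left; auto|].
    right. exists (S m). simpl in *. specialize (Hg m). apply Rabs_le. lra. }
  destruct (HR del Hdel) as [M HM]. specialize (HM M (le_n M)). unfold R_dist in HM.
  apply Rabs_def2 in HM. destruct (Climb M); auto. lra.
Qed.

Definition halving (t : R) (n : nat) : R := t / 2 ^ S n.

Lemma halving_nonneg t n : 0 <= t -> 0 <= halving t n.
Proof.
  intros Ht. unfold halving. apply Rmult_le_pos; auto.
  left. apply Rinv_0_lt_compat, pow_lt. lra.
Qed.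

Lemma psum_halving t n : psum (halving t) n = t - t / 2 ^ n.
Proof.
  induction n as [|n IH]; simpl; [field|]. rewrite IH. unfold halving.
  assert (0 < 2 ^ n) by (apply pow_lt; lra). simpl. field. lra.
Qed.

Lemma psum_halving_le t n : 0 <= t -> psum (halving t) n <= t.
Proof.
  intros Ht. rewrite psum_halving. assert (0 < 2 ^ n) by (apply pow_lt; lra).
  assert (0 <= t / 2 ^ n) by (apply Rmult_le_pos; auto; left; apply Rinv_0_lt_compat; auto).
  lra.
Qed.

Lemma halving_small t e : 0 <= t -> 0 < e -> exists N, t / 2 ^ N < e.
Proof.
  intros Ht He. destruct (INR_archimed e t He) as [n Hn]. exists n.
  assert (INR n <= 2 ^ n).
  { clear. induction n as [|n IH]; [simpl; lra|]. rewrite S_INR. simpl.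
    assert (1 <= 2 ^ n) by (apply pow_R1_Rle; lra). lra. }
  assert (0 < 2 ^ n) by (apply pow_lt; lra).
  apply (Rmult_lt_reg_l (2 ^ n)); auto. unfold Rdiv.
  replace (2 ^ n * (t * / 2 ^ n)) with t by (field; lra). nra.
Qed.

(* Greedy binary expansion of [y / t]. *)
Lemma halving_approx t y N : 0 <= y <= t -> exists A,
  psum (mask A (halving t)) N <= y <= psum (mask A (halving t)) N + t / 2 ^ N.
Proof.
  intros Hy. induction N as [|N [A HA]]; [exists (fun _ => false); simpl; lra|].
  assert (Hq : 0 < 2 ^ N) by (apply pow_lt; lra).
  assert (E2 : t / 2 ^ N = 2 * (t / 2 ^ S N)) by (simpl; field; lra).
  set (A' := fun b i => if Nat.eq_dec i N then b else A i).
  assert (Ext : forall b, psum (mask (A' b) (halving t)) N = psum (mask A (halving t)) N).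
  { intro b. apply psum_ext. intros i Hi. unfold mask, A'.
    destruct (Nat.eq_dec i N); [lia|reflexivity]. }
  assert (At : forall b, mask (A' b) (halving t) N = if b then t / 2 ^ S N else 0).
  { intro b. unfold mask, A'. destruct (Nat.eq_dec N N); [reflexivity|lia]. }
  destruct (Rle_lt_dec (t / 2 ^ S N) (y - psum (mask A (halving t)) N));
    [exists (A' true)|exists (A' false)]; simpl psum; rewrite Ext, At; lra.
Qed.

Definition interleave (u v : nat -> R) (n : nat) : R :=
  if Nat.even n then u (Nat.div2 n) else v (Nat.div2 n).

Lemma interleave_even u v n : interleave u v (2 * n) = u n.
Proof. unfold interleave. rewrite Nat.even_even, Nat.div2_double. reflexivity. Qed.

Lemma interleave_odd u v n : interleave u v (2 * n + 1) = v n.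
Proof. unfold interleave. rewrite Nat.even_odd, Nat.div2_odd'. reflexivity. Qed.

Lemma psum_interleaved d u v N : (forall n, d (2 * n)%nat = u n) ->
  (forall n, d (2 * n + 1)%nat = v n) -> psum d (2 * N) = psum u N + psum v N.
Proof.
  intros Hu Hv. induction N as [|N IH]; [simpl; ring|].
  replace (2 * S N)%nat with (S (2 * N + 1)) by lia. cbn [psum].
  replace (2 * N + 1)%nat with (S (2 * N)) by lia. cbn [psum]. rewrite IH, Hu.
  replace (S (2 * N)) with (2 * N + 1)%nat by lia. rewrite Hv. ring.
Qed.

Lemma subsum_interleave_psums u v A N A' N' :
  subsum (interleave u v) (psum (mask A u) N + psum (mask A' v) N').
Proof.
  set (C := fun n => if Nat.even n then trunc A N (Nat.div2 n) else trunc A' N' (Nat.div2 n)).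
  assert (Ev : forall n, mask C (interleave u v) (2 * n)%nat = mask (trunc A N) u n).
  { intro n. unfold mask, C. rewrite interleave_even, Nat.even_even, Nat.div2_double. reflexivity. }
  assert (Od : forall n, mask C (interleave u v) (2 * n + 1)%nat = mask (trunc A' N') v n).
  { intro n. unfold mask, C. rewrite interleave_odd, Nat.even_odd, Nat.div2_odd'. reflexivity. }
  exists C. set (M := Nat.max N N').
  replace (psum (mask A u) N + psum (mask A' v) N') with (psum (mask C (interleave u v)) (2 * M)).
  - apply sums_finite_support. intros i Hi.
    destruct (Nat.Even_or_Odd i) as [[m ->]|[m ->]]; [rewrite Ev|rewrite Od];
      unfold mask, trunc; [replace (Nat.ltb m N) with false | replace (Nat.ltb m N') with false];
      try reflexivity; symmetry; apply Nat.ltb_ge; lia.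
  - rewrite (psum_interleaved _ _ _ M Ev Od), !psum_mask_trunc by lia. reflexivity.
Qed.

Lemma glb_nonneg_spec (P : R -> Prop) r0 : P r0 -> (forall r, P r -> 0 <= r) ->
  0 <= real (Glb_Rbar P) <= r0 /\ forall e, real (Glb_Rbar P) < e -> exists r, P r /\ r < e.
Proof.
  intros H0 Hp. destruct (Glb_Rbar_correct P) as [Hlb Hgr].
  assert (Z : Rbar_le 0 (Glb_Rbar P)) by (apply Hgr; intros x Hx; apply Hp; auto).
  pose proof (Hlb r0 H0) as L0.
  destruct (Glb_Rbar P) as [g| |]; simpl in *; try contradiction.
  split; [lra|]. intros e He. apply Classical_Prop.NNPP. intro Hno.
  assert (Rbar_le e g).
  { apply Hgr. intros x Hx. simpl. destruct (Rle_lt_dec e x); auto. exfalso; eauto. }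
  simpl in *. lra.
Qed.

Lemma le_lub_unit (P : R -> Prop) r : (forall x, P x -> 0 <= x <= 1) -> P r ->
  r <= real (Lub_Rbar P).
Proof.
  intros Hp Hr. destruct (Lub_Rbar_correct P) as [Hub Hl].
  assert (Rbar_le (Lub_Rbar P) 1) by (apply Hl; intros x Hx; apply Hp; auto).
  pose proof (Hub r Hr).
  destruct (Lub_Rbar P); simpl in *; try contradiction. lra.
Qed.

Lemma dist_set_spec x B : (exists b, B b) -> in_unit_interval B -> 0 <= x <= 1 ->
  0 <= dist_set x B <= 1 /\ forall e, dist_set x B < e -> exists b, B b /\ Rabs (x - b) < e.
Proof.
  intros [b0 Hb0] HB Hx. unfold dist_set.
  destruct (glb_nonneg_spec (fun r => exists b, B b /\ r = Rabs (x - b)) (Rabs (x - b0)))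
    as [H1 H2]; eauto.
  { intros r [b [_ ->]]. apply Rabs_pos. }
  split.
  - specialize (HB b0 Hb0). split; [lra|]. eapply Rle_trans; [apply H1|]. apply Rabs_le. lra.
  - intros e He. destruct (H2 e He) as [r [[b [Hb ->]] Hr]]. eauto.
Qed.

Lemma hausdorff_dist_lt K K' e : (exists x, K x) -> (exists x, K' x) ->
  in_unit_interval K -> in_unit_interval K' -> hausdorff_dist K' K < e ->
  (forall x, K' x -> exists y, K y /\ Rabs (x - y) < e) /\
  (forall y, K y -> exists x, K' x /\ Rabs (x - y) < e).
Proof.
  intros HK HK' UK UK' Hd. unfold hausdorff_dist in Hd.
  pose proof (Rmax_l (real (Lub_Rbar (fun r => exists a, K' a /\ r = dist_set a K)))
                     (real (Lub_Rbar (fun r => exists b, K b /\ r = dist_set b K')))).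
  pose proof (Rmax_r (real (Lub_Rbar (fun r => exists a, K' a /\ r = dist_set a K)))
                     (real (Lub_Rbar (fun r => exists b, K b /\ r = dist_set b K')))).
  split.
  - intros x Hx. apply (dist_set_spec x K HK UK (UK' x Hx)).
    eapply Rle_lt_trans; [|eapply Rle_lt_trans; [apply H|apply Hd]].
    apply le_lub_unit; eauto. intros r [a [Ha ->]]. apply (dist_set_spec a K HK UK (UK' a Ha)).
  - intros y Hy. destruct (dist_set_spec y K' HK' UK' (UK y Hy)) as [_ D2].
    destruct (D2 e) as [x [Hx Hxy]].
    + eapply Rle_lt_trans; [|eapply Rle_lt_trans; [apply H0|apply Hd]].
      apply le_lub_unit; eauto. intros r [a [Ha ->]].
      apply (dist_set_spec a K' HK' UK' (UK a Ha)).
    + exists x. split; auto. rewrite Rabs_minus_sym. auto.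
Qed.

Definition approximates (K : R -> Prop) (a : nat -> R) (e : R) : Prop :=
  (forall x, subsum a x -> exists y, K y /\ Rabs (x - y) < e) /\
  (forall y, K y -> exists x, subsum a x /\ Rabs (x - y) < e).

Section LimitSeries.

Variable K : R -> Prop.
Hypothesis K_closed :
  forall x, (forall del, 0 < del -> exists y, K y /\ Rabs (y - x) < del) -> K x.

Variables (c : nat -> nat -> R) (s : nat -> R).
Hypothesis c_nonneg : forall k i, 0 <= c k i.
Hypothesis c_decreasing : forall k, Un_decreasing (c k).
Hypothesis c_sums : forall k, sums (c k) (s k).
Hypothesis c_approximates : forall k, approximates K (c k) (/ INR (S k)).

Variables (s_lim : R) (b : nat -> R).
Hypothesis cluster : forall N e k0, 0 < e -> exists k, (k0 <= k)%nat /\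
  Rabs (s k - s_lim) < e /\ forall m, (m < N)%nat -> Rabs (c k m - b m) < e.

Lemma cluster_close N e k0 : 0 < e -> exists k, (k0 <= k)%nat /\
  Rabs (s k - s_lim) < e /\ Rabs (c k N - b N) < e /\
  Rabs (psum (c k) N - psum b N) <= e /\
  forall A, Rabs (psum (mask A (c k)) N - psum (mask A b) N) <= e.
Proof.
  intros He. pose proof (pos_INR N). set (eta := e / (INR N + 1)).
  assert (Heta : 0 < eta) by (apply Rdiv_lt_0_compat; lra).
  assert (Heta_e : eta <= e /\ INR N * eta <= e).
  { unfold eta. split; apply (Rmult_le_reg_l (INR N + 1)); try lra;
      unfold Rdiv; field_simplify; nra. }
  destruct (cluster (S N) eta k0 Heta) as [k [Hk [Hs Hc]]].
  assert (Hc' : forall m, (m < N)%nat -> Rabs (c k m - b m) <= eta)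
    by (intros; left; apply Hc; lia).
  exists k. repeat split; auto.
  - lra.
  - eapply Rlt_le_trans; [apply Hc; lia|lra].
  - eapply Rle_trans; [apply psum_dist_le, Hc'|lra].
  - intro A. eapply Rle_trans; [apply psum_mask_dist_le, Hc'|lra].
Qed.

Lemma b_nonneg m : 0 <= b m.
Proof.
  destruct (Rle_lt_dec 0 (b m)); auto. exfalso.
  destruct (cluster (S m) (- b m) O ltac:(lra)) as [k [_ [_ Hk]]].
  specialize (Hk m ltac:(lia)). apply Rabs_def2 in Hk. pose proof (c_nonneg k m). lra.
Qed.

Lemma b_summable : exists B, sums b B /\ B <= s_lim.
Proof.
  apply sums_of_bounded; [exact b_nonneg|]. intro N. apply Rle_plus_epsilon. intros e He.
  destruct (cluster_close N (e/2) O ltac:(lra)) as [k [_ [Hs [_ [Hfull _]]]]].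
  pose proof (psum_le_sums (c k) (c_nonneg k) (s k) N (c_sums k)).
  apply Rabs_def2 in Hs. apply Rabs_le_between in Hfull. lra.
Qed.

Variable B : R.
Hypothesis b_sums : sums b B.
Hypothesis B_le : B <= s_lim.

Definition limit_series : nat -> R := interleave b (halving (s_lim - B)).

Lemma limit_series_nonneg n : 0 <= limit_series n.
Proof.
  unfold limit_series, interleave. destruct (Nat.even n).
  - apply b_nonneg.
  - apply halving_nonneg. lra.
Qed.

Lemma limit_series_summable : exists D, sums limit_series D.
Proof.
  destruct (sums_of_bounded limit_series limit_series_nonneg (B + (s_lim - B)))
    as [D [HD _]]; [|eauto].
  intro n. eapply Rle_trans.
  - apply Rge_le, (growing_prop _ (2 * n) n); [apply psum_growing, limit_series_nonneg|lia].
  - rewrite (psum_interleaved _ b (halving (s_lim - B)) n) by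
      (intro; unfold limit_series; first [apply interleave_even|apply interleave_odd]).
    pose proof (psum_le_sums b b_nonneg B n b_sums).
    pose proof (psum_halving_le (s_lim - B) n ltac:(lra)). lra.
Qed.

Lemma K_contains_prefix_plus_tail A N0 y : 0 <= y <= s_lim - B ->
  K (psum (mask A b) N0 + y).
Proof.
  intros Hy. apply K_closed. intros del Hdel.
  assert (He : 0 < del / 8) by lra. set (e := del / 8) in He.
  assert (Hde : del = 8 * e) by (unfold e; field).
  destruct (b_sums e He) as [N1 HN1]. specialize (HN1 N1 (le_n _)). unfold R_dist in HN1.
  set (N := Nat.max N0 N1).
  assert (HbN : psum b N <= B /\ B - psum b N < e /\ b N < e).
  { pose proof (psum_le_sums b b_nonneg B N b_sums).
    pose proof (psum_le_sums b b_nonneg B (S N) b_sums). simpl in *.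
    pose proof (growing_prop _ N N1 (psum_growing b b_nonneg) ltac:(lia)).
    apply Rabs_def2 in HN1. lra. }
  destruct (inv_succ_lt e He) as [J HJ].
  destruct (cluster_close N e J He) as [k [Hk [Hs [HcN [Hfull Hmask]]]]].
  set (g := fun i => c k (N + i)%nat). set (Rt := s k - psum (c k) N).
  assert (Hg : sums g Rt) by (apply sums_tail, c_sums).
  assert (Hgb : forall i, 0 <= g i <= 2 * e).
  { intro i. unfold g. split; [apply c_nonneg|].
    pose proof (decreasing_prop _ N (N + i) (c_decreasing k) ltac:(lia)).
    apply Rabs_def2 in HcN. lra. }
  assert (HRt : 0 <= Rt /\ s_lim - B - 2 * e <= Rt).
  { pose proof (psum_le_sums (c k) (c_nonneg k) (s k) N (c_sums k)).
    apply Rabs_def2 in Hs. apply Rabs_le_between in Hfull. unfold Rt. lra. }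
  set (ys := Rmin y Rt).
  assert (Hys : 0 <= ys <= Rt /\ Rabs (y - ys) <= 2 * e).
  { unfold ys. destruct (Rle_dec y Rt).
    - rewrite Rmin_left, Rminus_eq_0, Rabs_R0 by lra. lra.
    - rewrite Rmin_right, Rabs_right by lra. lra. }
  destruct (psum_dense g Rt (2 * e) ys ltac:(lra) Hgb Hg (proj1 Hys)) as [m Hm].
  destruct (proj1 (c_approximates k) (psum (mask (trunc A N0) (c k)) N + psum g m)) as [z [Hz Hzd]];
    [apply subsum_split|].
  exists z. split; auto.
  rewrite <- (psum_mask_trunc b A N0 N) by lia.
  specialize (Hmask (trunc A N0)). specialize (HJ k Hk).
  apply Rabs_le_between in Hmask. apply Rabs_le_between in Hm.
  destruct Hys as [_ Hys]. apply Rabs_le_between in Hys.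
  apply Rabs_def2 in Hzd. apply Rabs_def1; lra.
Qed.

Lemma subsum_limit_in_K x : subsum limit_series x -> K x.
Proof.
  intros [A HA]. apply K_closed. intros del Hdel.
  destruct (HA del Hdel) as [M HM]. specialize (HM (2 * M)%nat ltac:(lia)).
  exists (psum (mask A limit_series) (2 * M)). split; [|exact HM].
  rewrite (psum_interleaved _ (mask (fun n => A (2 * n)%nat) b)
             (mask (fun n => A (2 * n + 1)%nat) (halving (s_lim - B))) M)
    by (intro; unfold mask, limit_series; first [rewrite interleave_even|rewrite interleave_odd];
        reflexivity).
  apply K_contains_prefix_plus_tail. split.
  - apply psum_nonneg. intro. apply mask_nonneg. intro. apply halving_nonneg. lra.
  - eapply Rle_trans; [|apply (psum_halving_le _ M); lra].
    apply psum_le_compat. intros. apply mask_le. intro. apply halving_nonneg. lra.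
Qed.

Lemma K_in_subsum_limit x : K x -> subsum limit_series x.
Proof.
  intros Hx. destruct limit_series_summable as [D HD].
  apply (subsum_closed limit_series D x limit_series_nonneg HD). intros del Hdel.
  assert (He : 0 < del / 8) by lra. set (e := del / 8) in He.
  assert (Hde : del = 8 * e) by (unfold e; field).
  destruct (b_sums e He) as [N HN]. specialize (HN N (le_n _)). unfold R_dist in HN.
  destruct (inv_succ_lt e He) as [J HJ].
  destruct (cluster_close N e J He) as [k [Hk [Hs [_ [Hfull Hmask]]]]].
  destruct (proj2 (c_approximates k) x Hx) as [x' [[A HA] Hx']].
  pose proof (subsum_tail_bounds (c k) (c_nonneg k) (s k) A x' N (c_sums k) HA) as Tl.
  set (r := x' - psum (mask A (c k)) N) in *.
  assert (Er : x' = psum (mask A (c k)) N + r) by (unfold r; ring).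
  set (y0 := Rmin r (s_lim - B)).
  assert (Hy0 : 0 <= y0 <= s_lim - B /\ Rabs (r - y0) <= 3 * e).
  { pose proof (psum_le_sums b b_nonneg B N b_sums).
    apply Rabs_def2 in Hs. apply Rabs_le_between in Hfull. apply Rabs_def2 in HN.
    unfold y0. destruct (Rle_dec r (s_lim - B)).
    - rewrite Rmin_left, Rminus_eq_0, Rabs_R0 by lra. lra.
    - rewrite Rmin_right, Rabs_right by lra. lra. }
  destruct (halving_small (s_lim - B) e ltac:(lra) He) as [N' HN'].
  destruct (halving_approx (s_lim - B) y0 N' (proj1 Hy0)) as [A' HA'].
  exists (psum (mask A b) N + psum (mask A' (halving (s_lim - B))) N'). split.
  - apply subsum_interleave_psums.
  - specialize (HJ k Hk). specialize (Hmask A).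
    apply Rabs_def2 in Hx'. apply Rabs_le_between in Hmask.
    destruct Hy0 as [_ Hy0]. apply Rabs_le_between in Hy0. apply Rabs_def1; lra.
Qed.

End LimitSeries.

Lemma decreasing_approximation K a e : (forall n, 0 <= a n) ->
  (forall x, subsum a x -> x <= 1) -> approximates K a e ->
  exists c sc, (forall i, 0 <= c i) /\ Un_decreasing c /\ sums c sc /\ sc <= 1 /\
    approximates K c e.
Proof.
  intros Ha Ha1 [Hnear1 Hnear2].
  destruct (sums_of_bounded a Ha 1) as [sa [Hsa Hsa1]]; [intro; apply Ha1, subsum_psum|].
  destruct (decreasing_rearrangement a sa Ha Hsa) as [c [Hc [Hcd [Hcs Hiff]]]].
  exists c, sa. repeat split; auto.
  - intros x Hx. apply Hnear1, Hiff, Hx.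
  - intros y Hy. destruct (Hnear2 y Hy) as [x [Hx Hxy]]. exists x. split; auto. apply Hiff, Hx.
Qed.

Lemma subsum_set_of_approximable K :
  (forall x, (forall del, 0 < del -> exists y, K y /\ Rabs (y - x) < del) -> K x) ->
  (forall k, exists a, (forall n, 0 <= a n) /\ (forall x, subsum a x -> x <= 1) /\
     approximates K a (/ INR (S k))) ->
  exists d, (forall n, 0 <= d n) /\ (exists D, sums d D) /\ forall x, K x <-> subsum d x.
Proof.
  intros HK Hk.
  assert (H : forall k, exists p : (nat -> R) * R, (forall i, 0 <= fst p i) /\
    Un_decreasing (fst p) /\ sums (fst p) (snd p) /\ snd p <= 1 /\
    approximates K (fst p) (/ INR (S k))).
  { intro k. destruct (Hk k) as [a [Ha [Ha1 Happ]]].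
    destruct (decreasing_approximation K a _ Ha Ha1 Happ) as [c [sc Hc]]. exists (c, sc). exact Hc. }
  apply choice in H as [p Hp].
  set (c := fun k => fst (p k)). set (s := fun k => snd (p k)).
  assert (Hc : forall k i, 0 <= c k i) by apply Hp.
  assert (Hcd : forall k, Un_decreasing (c k)) by apply Hp.
  assert (Hcs : forall k, sums (c k) (s k)) by apply Hp.
  assert (Happ : forall k, approximates K (c k) (/ INR (S k))) by apply Hp.
  assert (Hbound : forall k i, 0 <= s k <= 1 /\ c k i <= s k).
  { intros k i. pose proof (psum_le_sums (c k) (Hc k) (s k) (S i) (Hcs k)).
    pose proof (psum_nonneg (c k) (Hc k) i). pose proof (Hc k i).
    destruct (Hp k) as [_ [_ [_ [Hs1 _]]]]. simpl in *. fold (s k) in Hs1. lra. }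
  destruct (diagonal_cluster (fun k n => match n with O => s k | S m => c k m end)) as [f Hf].
  { intros k [|i]; [pose proof (Hbound k O)|pose proof (Hbound k i); pose proof (Hc k i)]; lra. }
  assert (Hcluster : forall N e k0, 0 < e -> exists k, (k0 <= k)%nat /\
    Rabs (s k - f O) < e /\ forall m, (m < N)%nat -> Rabs (c k m - f (S m)) < e).
  { intros N e k0 He. destruct (Hf (S N) e He k0) as [k [Hk0 Hi]].
    exists k. repeat split; auto.
    - apply (Hi O). lia.
    - intros m Hm. apply (Hi (S m)). lia. }
  destruct (b_summable c s Hc Hcs _ _ Hcluster) as [B [HB HBle]].
  exists (limit_series (f O) (fun m => f (S m)) B). split; [|split; [|split]].
  - exact (limit_series_nonneg c s Hc _ _ Hcluster B HBle).
  - exact (limit_series_summable c s Hc _ _ Hcluster B HB HBle).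
  - exact (K_in_subsum_limit K c s Hc Hcs Happ _ _ Hcluster B HB HBle x).
  - exact (subsum_limit_in_K K HK c s Hc Hcd Hcs Happ _ _ Hcluster B HB HBle x).
Qed.

Lemma closed_of_compact K : compact K ->
  forall x, (forall del, 0 < del -> exists y, K y /\ Rabs (y - x) < del) -> K x.
Proof.
  intros HK x Hx. apply compact_P2, closed_set_P1 in HK.
  destruct HK as [_ H]. apply H. intros V [delta Hd].
  destruct (Hx delta (cond_pos delta)) as [y [Hy Hyx]].
  exists y. split; [apply Hd; exact Hyx|exact Hy].
Qed.

Lemma calA_near_approximates K K' e : (exists x, K x) -> in_unit_interval K ->
  in_calA K' -> hausdorff_dist K' K < e ->
  exists a, (forall n, 0 <= a n) /\ (forall x, subsum a x -> x <= 1) /\ approximates K a e.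
Proof.
  intros HK UK [a [_ [Hiff UK']]] Hd.
  assert (Hsub : forall x, subsum a x -> 0 <= x <= 1)
    by (intros x Hx; apply UK', Hiff, achievement_set_subsum, Hx).
  destruct (hausdorff_dist_lt K K' e HK) as [E1 E2]; auto.
  { exists 0. apply Hiff, achievement_set_subsum. exact (subsum_psum a 0). }
  exists a. repeat split.
  - intro n. apply Hsub, subsum_term.
  - intros x Hx. apply Hsub, Hx.
  - intros x Hx. apply E1, Hiff, achievement_set_subsum, Hx.
  - intros y Hy. destruct (E2 y Hy) as [x [Hx Hxy]].
    exists x. split; auto. apply achievement_set_subsum, Hiff, Hx.
Qed.

Lemma closed_in_hausdorff_calA (inX : (R -> Prop) -> Prop) :
  (forall K, inX K -> (exists x, K x) /\ compact K /\ in_unit_interval K) ->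
  closed_in_hausdorff inX in_calA.
Proof.
  intros HX K HK HnA. destruct (HX K HK) as [Kne [Kc KU]].
  apply Classical_Prop.NNPP. intro Hno. apply HnA.
  assert (Hk : forall k, exists a, (forall n, 0 <= a n) /\ (forall x, subsum a x -> x <= 1) /\
                 approximates K a (/ INR (S k))).
  { intro k. apply Classical_Prop.NNPP. intro Hnone. apply Hno.
    exists (/ INR (S k)). split; [apply inv_succ_pos|].
    intros K' _ Hd HA. apply Hnone. exact (calA_near_approximates K K' _ Kne KU HA Hd). }
  destruct (subsum_set_of_approximable K (closed_of_compact K Kc) Hk)
    as [d [Hd [[D HD] Hiff]]].
  exists d. split; [|split; [|exact KU]].
  - apply ex_series_ext with (a := d); [intro n; symmetry; apply Rabs_pos_eq, Hd|].
    exists D. apply is_series_sums, HD.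
  - intro x. rewrite achievement_set_subsum. apply Hiff.
Qed.

Theorem theorem4p5 :
  closed_in_hausdorff in_K0_01 in_calA /\ closed_in_hausdorff in_K01 in_calA.
Proof.
  split; apply closed_in_hausdorff_calA.
  - intros K [H0 [Hc HU]]. split; eauto.
  - intros K HK. exact HK.
Qed.
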